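(* Let $F$ be $(\ell,\omega)$-relatively smooth on $\mathcal X\cap\mathcal S$. Then for any $\rho\ge2\ell$ and $x\in\mathcal X\cap\mathcal S$ we have $\Phi_{1/\rho}(x)\ge\Phi(x^+)$, where $x^+:=\arg\min_{y\in\mathcal X}\langle\nabla F(x),y\rangle+r(y)+(\rho-\ell)D_\omega(y,x)$.
   Context: Let $\mathcal X\subseteq\mathbb R^d$ be closed and convex, $\|\cdot\|$ a norm on $\mathbb R^d$. The problem is $\min_{x\in\mathcal X}\Phi(x):=F(x)+r(x)$, with $F$ differentiable and $r:\mathbb R^d\to\mathbb R$ convex, proper, lower semicontinuous. A DGF is $\omega:\mathrm{cl}(\mathcal S)\to\mathbb R$, $\mathcal S$ open with $\mathrm{ri}(\mathcal X)\subseteq\mathcal S$, $\omega$ continuously differentiable on $\mathcal S$ and $1$-strongly convex w.r.t. $\|\cdot\|$ on $\mathrm{cl}(\mathcal S)$; $D_\omega(x,y)=\omega(x)-\omega(y)-\langle\nabla\omega(y),x-y\rangle$. Bregman Moreau envelope: $\Phi_{1/\rho}(x):=\min_{y\in\mathcal X}[\Phi(y)+\rho D_\omega(y,x)]$ (minimizers assumed to exist). $F$ is $(\ell,\omega)$-relatively smooth on $\mathcal X\cap\mathcal S$ if for all $x,y\in\mathcal X\cap\mathcal S$: $-\ell D_\omega(x,y)\le F(x)-F(y)-\langle\nabla F(y),x-y\rangle\le\ell D_\omega(x,y)$. *)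

(* R^d is modelled as row vectors 'rV[R]_d over R : realType. *)
From HB Require Import structures.
From mathcomp Require Import all_boot all_order all_algebra.
From mathcomp Require Import all_classical all_reals all_analysis.
Set Implicit Arguments. Unset Strict Implicit. Unset Printing Implicit Defensive.
Import Order.TTheory GRing.Theory Num.Theory.
Import numFieldNormedType.Exports.
Local Open Scope classical_set_scope.
Local Open Scope ring_scope.

Section Defs.
Variables (R : realType) (d : nat).
Notation V := 'rV[R]_d.

Definition dotv (u v : V) : R := \sum_(i < d) u ord0 i * v ord0 i.

Definition is_norm (N : V -> R) : Prop :=
  [/\ forall x, N x = 0 -> x = 0,
      forall (a : R) x, N (a *: x) = `|a| * N x
    & forall x y, N (x + y) <= N x + N y].

Definition convex_setV (C : set V) : Prop :=
  forall x y (t : R), C x -> C y -> 0 <= t <= 1 -> C (t *: x + (1 - t) *: y).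

Definition convex_fun (f : V -> R) : Prop :=
  forall x y (t : R), 0 <= t <= 1 ->
    f (t *: x + (1 - t) *: y) <= t * f x + (1 - t) * f y.

Definition aff_hull (C : set V) : set V :=
  [set z | exists n (c : 'I_n -> R) (p : 'I_n -> V),
      [/\ forall i, C (p i), \sum_(i < n) c i = 1 & z = \sum_(i < n) c i *: p i]].

Definition rel_interior (C : set V) : set V :=
  [set x | C x /\ exists2 e : R, 0 < e &
      forall y, aff_hull C y -> `|y - x| < e -> C y].

Definition has_grad (f : V -> R) (g : V) (x : V) : Prop :=
  differentiable f x /\ forall h, 'd f x h = dotv g h.

Definition strongly_convex1 (N : V -> R) (f : V -> R) (C : set V) : Prop :=
  forall x y (t : R), C x -> C y -> 0 <= t <= 1 -> C (t *: x + (1 - t) *: y) ->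
    f (t *: x + (1 - t) *: y)
      <= t * f x + (1 - t) * f y - t * (1 - t) / 2 * (N (x - y)) ^+ 2.

Definition is_DGF (N : V -> R) (X S : set V) (omega : V -> R) (gomega : V -> V) : Prop :=
  [/\ open S, rel_interior X `<=` S,
      (forall x, S x -> has_grad omega (gomega x) x),
      {in S, continuous gomega}
    & strongly_convex1 N omega (closure S)].

Definition bregman (omega : V -> R) (gomega : V -> V) (x y : V) : R :=
  omega x - omega y - dotv (gomega y) (x - y).

Definition rel_smooth (F : V -> R) (gradF : V -> V) (l : R)
    (omega : V -> R) (gomega : V -> V) (A : set V) : Prop :=
  forall x y, A x -> A y ->
    - l * bregman omega gomega x y <= F x - F y - dotv (gradF y) (x - y)
    <= l * bregman omega gomega x y.

Definition moreau_env (Phi : V -> R) (omega : V -> R) (gomega : V -> V)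
    (X : set V) (rho : R) (x : V) : R :=
  inf [set Phi y + rho * bregman omega gomega y x | y in X].

End Defs.

From HB Require Import structures.
From mathcomp Require Import all_boot all_order all_algebra.
From mathcomp Require Import all_classical all_reals all_analysis.
From mathcomp Require Import ring lra.
Import Order.TTheory GRing.Theory Num.Theory.
Import numFieldNormedType.Exports.
Local Open Scope classical_set_scope.
Local Open Scope ring_scope.

(* Minimality of x^+ and the two-sided relative smoothness bound give, for y in X,
     Phi(x^+) <= F(x) + <grad F(x), y - x> + r(y) + (rho - l) D(y, x)
                 - (rho - 2 l) D(x^+, x)
              <= Phi(y) + rho D(y, x),
   and D(x^+, x) >= 0 by strong convexity of omega.  Relative smoothness is only
   assumed on X /\ S, which may miss boundary points of X such as x^+ or y.  They
   are reached along segments ending there and starting at a relative interior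
   point of X, which lie in X /\ S up to the endpoint: F is continuous and
   D(., x) is convex along such a segment, which suffices to pass both
   inequalities to the endpoint.  If l < 0, relative smoothness forces D(., x) = 0
   on X /\ S, so X /\ S = {x} and then X = {x}. *)

Section InnerProduct.
Context {R : realType} {d : nat}.

Lemma dotv_is_linear (g : 'rV[R]_d) : linear_for *%R (dotv g).
Proof.
move=> a u v; rewrite /dotv mulr_sumr -big_split.
by apply: eq_bigr => i _; rewrite !mxE mulrDr mulrCA.
Qed.

HB.instance Definition _ (g : 'rV[R]_d) :=
  GRing.isLinear.Build R 'rV[R]_d R *%R (dotv g) (dotv_is_linear g).

Lemma dotv_combr (g u v : 'rV[R]_d) a b :
  dotv g (a *: u + b *: v) = a * dotv g u + b * dotv g v.
Proof. by rewrite linearD !linearZ. Qed.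

End InnerProduct.

Section RelativeInterior.
Context {R : realType} {d : nat}.
Local Notation V := 'rV[R]_d.
Implicit Types (X : set V) (x y c p : V).

Lemma convex_setV_shift_sum X x n (v : 'I_n -> V) (lam : 'I_n -> R) :
  convex_setV X -> X x -> (forall i, X (x + v i)) -> (forall i, 0 <= lam i) ->
  \sum_i lam i <= 1 -> X (x + \sum_i lam i *: v i).
Proof.
move=> cX Xx; elim: n v lam => [|n IH] v lam Xv lam0 lam1.
  by rewrite big_ord0 addr0.
rewrite !big_ord_recl in lam1 *.
set a := lam ord0 in lam1 *; set s := \sum_(i < n) _ in lam1.
have s0 : 0 <= s by apply: sumr_ge0.
have [a1|a1] := eqVneq a 1.
  have s_eq0 : s = 0 by apply/eqP; rewrite eq_le s0 andbT; lra.
  have lam_eq0 i : lam (lift ord0 i) = 0.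
    exact: (psumr_eq0P (fun i _ => lam0 (lift ord0 i)) s_eq0).
  rewrite big1 => [|i _]; last by rewrite lam_eq0 scale0r.
  by rewrite addr0 a1 scale1r.
have a_lt1 : a < 1 by rewrite lt_neqAle a1 /=; lra.
have b_neq0 : 1 - a != 0 by rewrite subr_eq0 eq_sym.
pose mu i := lam (lift ord0 i) / (1 - a).
have Xrest : X (x + \sum_i mu i *: v (lift ord0 i)).
  apply: IH => [i|i|]; [exact: Xv | apply: divr_ge0 => //; lra|].
  by rewrite -mulr_suml ler_pdivrMr ?mul1r -/s; lra.
have := cX _ _ a (Xv ord0) Xrest; rewrite lam0 ltW // => /(_ isT).
congr X; rewrite !scalerDr scaler_sumr scalerBl scale1r.
under eq_bigr do rewrite scalerA /mu mulrCA divff // mulr1.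
by rewrite addrACA [a *: x + _]addrC subrK.
Qed.

Lemma aff_hull_sub_shift X x (A : {vspace V}) :
  (forall y, X y -> y - x \in A) -> forall y, aff_hull X y -> y - x \in A.
Proof.
move=> XA y [n [c [p [Xp c1 ->]]]].
have -> : \sum_(i < n) c i *: p i - x = \sum_(i < n) c i *: (p i - x).
  by under [RHS]eq_bigr do rewrite scalerBr; rewrite sumrB -scaler_suml c1 scale1r.
by apply: memv_suml => i _; apply/memvZ/XA.
Qed.

Lemma exists_free_span_shift X x :
  exists s : seq V, [/\ free s, forall v, v \in s -> X (x + v)
    & forall y, X y -> y - x \in span s].
Proof.
pose P k := `[< exists s : seq V,
   [/\ size s = k, free s & forall v, v \in s -> X (x + v)] >].
have P0 : exists k, P k by exists 0%N; apply/asboolP; exists [::]; rewrite nil_free.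
have Pub k : P k -> (k <= \dim (fullv : {vspace V}))%N.
  by move=> /asboolP [s [<- /eqP <- _]]; apply/dimvS/subvf.
case: (ex_maxnP P0 Pub) => k /asboolP [s [sk fs Xs]] kmax.
exists s; split => // y Xy; apply: contraT => ys.
have : P k.+1.
  apply/asboolP; exists (y - x :: s); split; first by rewrite /= sk.
    by rewrite free_cons ys.
  by move=> w; rewrite in_cons => /orP[/eqP->|/Xs //]; rewrite addrC subrK.
by move/kmax; rewrite ltnn.
Qed.

Lemma coef_le_mx_norm (u : V) j : `|u 0 j| <= `|u|.
Proof.
rewrite [leRHS]/Num.norm /= mx_normrE; apply/bigmax_geP; right => /=.
by exists (0, j).
Qed.

Lemma scalar_le_mx_norm (f : {scalar V}) (u : V) :
  `|f u| <= (\sum_j `|f (delta_mx 0 j)|) * `|u|.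
Proof.
rewrite {1}(row_sum_delta u) linear_sum mulr_suml.
apply: le_trans (ler_norm_sum _ _ _) _; apply: ler_sum => j _.
by rewrite linearZ /= normrM mulrC ler_wpM2l ?coef_le_mx_norm.
Qed.

(* The barycenter of [x] and the [x + s_i] is interior to their simplex,
   relatively to the affine space [x + span s]; the coordinates in the basis
   [s] are Lipschitz, which gives the radius. *)
Lemma barycenter_rel_ball X x (s : seq V) :
  convex_setV X -> X x -> free s -> (forall v, v \in s -> X (x + v)) ->
  exists2 e, 0 < e & forall y, y - x \in span s ->
    `|y - (x + \sum_(i < size s) (size s).+1%:R^-1 *: s`_i)| < e -> X y.
Proof.
move=> cX Xx fs Xs; set k := size s; set c := x + _.
pose t := in_tuple s; pose m : R := k.+1%:R; pose w := m^-1.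
have m_gt0 : 0 < m by rewrite ltr0n.
have w_gt0 : 0 < w by rewrite invr_gt0.
have km : k%:R = m - 1 by rewrite /m -natr1 addrK.
have kw : k%:R * w = 1 - w by rewrite km mulrBl mulfV ?gt_eqF // mul1r.
pose C := \sum_(i < k) \sum_j `|coord t i (delta_mx 0 j)|.
have C_ge0 : 0 <= C by do 2 apply: sumr_ge0 => ? _.
exists (w ^+ 2 / (C + 1)) => [|y ys yc].
  by rewrite divr_gt0 ?exprn_gt0 //; lra.
have coord_y i : coord t i (y - x) = coord t i (y - c) + w.
  have -> : y - x = (y - c) + (c - x) by rewrite addrA subrK.
  rewrite linearD /=; congr (_ + _).
  by rewrite /c addrC addKr coord_sum_free.
have coord_small i : `|coord t i (y - c)| <= w ^+ 2.
  apply: le_trans (scalar_le_mx_norm _ _) _.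
  have Ci : \sum_j `|coord t i (delta_mx 0 j)| <= C.
    by rewrite /C (bigD1 i) //= lerDl; do 2 apply: sumr_ge0 => ? _.
  apply: le_trans (_ : C * (w ^+ 2 / (C + 1)) <= _).
    by apply: ler_pM (ltW yc) => //; apply: sumr_ge0.
  by rewrite mulrCA ger_pMr ?exprn_gt0 // ler_pdivrMr; lra.
have -> : y = x + \sum_i coord t i (y - x) *: t`_i.
  have yt : y - x \in span t by [].
  by rewrite -(coord_span yt) addrC subrK.
have w_le1 : w <= 1 by rewrite invf_le1 // ler1n.
apply: convex_setV_shift_sum => // [i|i|]; first exact/Xs/mem_nth.
  by rewrite coord_y; have := coord_small i; rewrite ler_norml; nra.
have sum_small : \sum_(i < k) coord t i (y - c) <= k%:R * w ^+ 2.
  apply: le_trans (ler_sum _ (fun i _ => ler_normlW (coord_small i))) _.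
  by rewrite sumr_const card_ord mulr_natl.
under eq_bigr do rewrite coord_y.
by rewrite big_split /= sumr_const card_ord -mulr_natl; nra.
Qed.

Lemma rel_interior_segment X x (A : {vspace V}) c e :
  convex_setV X -> (forall y, X y -> y - x \in A) -> c - x \in A -> 0 < e ->
  (forall y, y - x \in A -> `|y - c| < e -> X y) ->
  forall p t, X p -> 0 < t <= 1 -> rel_interior X (t *: c + (1 - t) *: p).
Proof.
move=> cX XA cA e_gt0 ball p t Xp /andP[t_gt0 t_le1].
have t_neq0 : t != 0 by rewrite gt_eqF.
have Xc : X c by apply: ball; rewrite ?subrr ?normr0.
split; first by apply: cX; rewrite ?(ltW t_gt0).
exists (t * e) => [|y yX yz]; first exact: mulr_gt0.
pose q := c + t^-1 *: (y - (t *: c + (1 - t) *: p)).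
have Xq : X q.
  apply: ball.
    have -> : q - x = t^-1 *: ((y - x) - (1 - t) *: (p - x)).
      by apply/rowP => j; rewrite !mxE; field.
    apply/memvZ/memvB; first exact: aff_hull_sub_shift XA _ yX.
    exact/memvZ/XA.
  rewrite /q addrC addKr normrZ ger0_norm ?invr_ge0 ?ltW //.
  by rewrite ltr_pdivrMl.
have -> : y = t *: q + (1 - t) *: p by apply/rowP => j; rewrite !mxE; field.
by apply: cX; rewrite ?(ltW t_gt0).
Qed.

Lemma exists_rel_interior_segment X x : convex_setV X -> X x ->
  exists c, forall p t, X p -> 0 < t <= 1 ->
    rel_interior X (t *: c + (1 - t) *: p).
Proof.
move=> cX Xx; have [s [fs Xs XA]] := exists_free_span_shift X x.
have [e e_gt0 ball] := barycenter_rel_ball X x s cX Xx fs Xs.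
exists (x + \sum_(i < size s) (size s).+1%:R^-1 *: s`_i).
apply: rel_interior_segment XA _ e_gt0 ball => //.
by rewrite addrC addKr; apply: memv_suml => i _; apply/memvZ/memv_span/mem_nth.
Qed.

End RelativeInterior.

Section Segments.
Context {R : realType}.

Lemma lim_at_right0_le (h : R -> R) (L A B : R) :
  h t @[t --> 0^'+] --> L -> (\forall t \near 0^'+, h t <= A + t * B) ->
  L <= A.
Proof.
move=> hL hAB; apply: (cvgr_to_le (F := 0^'+) (f := fun t => h t - t * B)).
  have -> : L = L - 0 * B by rewrite mul0r subr0.
  exact: cvgB hL (cvgM (cvg_at_right_filter cvg_id) (cvg_cst B)).
by apply: filterS hAB => t; lra.
Qed.

Lemma near_right0_unit : \forall t \near (0 : R)^'+, 0 < t <= 1.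
Proof.
near=> t; apply/andP; split; near: t; [exact: nbhs_right_gt | exact: nbhs_right_le].
Unshelve. all: by end_near.
Qed.

Context {V : normedModType R}.
Implicit Types (c p : V).

Lemma segment_cvg c p : t *: c + (1 - t) *: p @[t --> 0^'+] --> p.
Proof.
have : t *: c + (1 - t) *: p @[t --> 0] --> 0 *: c + (1 - 0) *: p.
  apply: cvgD; apply: cvgZ; [exact: cvg_id | exact: cvg_cst | | exact: cvg_cst].
  by apply: cvgB; [exact: cvg_cst | exact: cvg_id].
by rewrite scale0r add0r subr0 scale1r => /cvg_at_right_filter.
Qed.

Lemma closure_segment (A : set V) c p :
  (forall t, 0 < t <= 1 -> A (t *: c + (1 - t) *: p)) -> closure A p.
Proof.
move=> Aseg; apply: (closed_cvg _ (@closed_closure _ A) _ _ (segment_cvg c p)).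
by apply: filterS near_right0_unit => t /Aseg /subset_closure.
Qed.

Lemma continuous_segment_le (f : V -> R) c p (A B : R) : {for p, continuous f} ->
  (forall t, 0 < t <= 1 -> f (t *: c + (1 - t) *: p) <= A + t * B) -> f p <= A.
Proof.
move=> fp fseg; apply: lim_at_right0_le (cvg_comp _ _ (segment_cvg c p) fp) _.
exact: filterS fseg near_right0_unit.
Qed.

Lemma segment_constant_eq c p y :
  (forall t, 0 < t <= 1 -> t *: c + (1 - t) *: p = y) -> p = y.
Proof.
move=> seg; have c_y : c = y.
  by rewrite -(seg 1) ?ltr01 ?lexx // subrr scale0r addr0 scale1r.
have half : 0 < (2 : R)^-1 <= 1 by apply/andP; split; lra.
have half_neq0 : 1 - 2^-1 != 0 :> R by rewrite subr_eq0 eq_sym invr_eq1 pnatr_eq1.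
apply: (scalerI half_neq0); apply: (addrI (2^-1 *: y)).
by rewrite -[in LHS]c_y seg // addrC -scalerDl subrK scale1r.
Qed.

End Segments.

Section Bregman.
Context {R : realType} {d : nat}.
Local Notation V := 'rV[R]_d.
Context {N : V -> R} {omega : V -> R} {gomega : V -> V}.

Lemma bregman_convex_comb (C : set V) x c p t :
  strongly_convex1 N omega C -> C c -> C p -> 0 <= t <= 1 ->
  C (t *: c + (1 - t) *: p) ->
  bregman omega gomega (t *: c + (1 - t) *: p) x
    <= t * bregman omega gomega c x + (1 - t) * bregman omega gomega p x.
Proof.
move=> sc Cc Cp t01 Cz; rewrite /bregman.
have -> : t *: c + (1 - t) *: p - x = t *: (c - x) + (1 - t) *: (p - x).
  by apply/rowP => j; rewrite !mxE; ring.
have := sc c p t Cc Cp t01 Cz.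
have : 0 <= t * (1 - t) / 2 * N (c - p) ^+ 2.
  case/andP: t01 => t_ge0 t_le1.
  by rewrite mulr_ge0 ?sqr_ge0 ?divr_ge0 ?mulr_ge0 ?subr_ge0.
rewrite dotv_combr; nra.
Qed.

Lemma bregman_ge_half_sqr (S : set V) x y :
  open S -> S x -> has_grad omega (gomega x) x ->
  strongly_convex1 N omega (closure S) -> closure S y ->
  N (y - x) ^+ 2 / 2 <= bregman omega gomega y x.
Proof.
move=> oS Sx [dw dg] sc Sy; rewrite /bregman; set v := y - x.
have quot : t^-1 *: (omega (t *: v + x) - omega x) @[t --> 0^'+]
    --> dotv (gomega x) v.
  by apply: cvg_dnbhs_at_right; rewrite -dg -deriveE //; exact: diff_derivable.
have near_S : \forall t \near 0^'+, S (t *: y + (1 - t) *: x).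
  exact: segment_cvg y x _ (open_nbhs_nbhs (conj oS Sx)).
suff : dotv (gomega x) v <= (omega y - omega x - N v ^+ 2 / 2) by lra.
apply: (lim_at_right0_le _ _ _ (N v ^+ 2 / 2) quot).
near=> t.
have /andP[t_gt0 t_le1] : 0 < t <= 1 by near: t; exact: near_right0_unit.
have Sz : S (t *: y + (1 - t) *: x) by near: t; exact: near_S.
have := sc y x t Sy (subset_closure Sx); rewrite (ltW t_gt0) t_le1.
move=> /(_ isT (subset_closure Sz)).
have -> : t *: y + (1 - t) *: x = t *: v + x.
  by apply/rowP => j; rewrite !mxE; ring.
rewrite -[t^-1 *: _]/(t^-1 * _) -/v [t^-1 * _]mulrC ler_pdivrMr //; lra.
Unshelve. all: by end_near.
Qed.

End Bregman.

Section RelSmoothExtension.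
Context {R : realType} {d : nat}.
Local Notation V := 'rV[R]_d.
Context {N : V -> R} {X S : set V} {omega : V -> R} {gomega : V -> V}.
Context {F : V -> R} {gradF : V -> V} {l : R} {x : V}.
Hypotheses (sc : strongly_convex1 N omega (closure S))
  (rs : rel_smooth F gradF l omega gomega (X `&` S)) (Xx : X x) (Sx : S x).
Local Notation D y := (bregman omega gomega y x).
Local Notation g := (gradF x).

Lemma rel_smooth_segment_end c p : 0 <= l -> {for p, continuous F} ->
  (forall t, 0 < t <= 1 -> (X `&` S) (t *: c + (1 - t) *: p)) ->
  - l * D p <= F p - F x - dotv g (p - x) <= l * D p.
Proof.
move=> l_ge0 Fp seg.
have XSc : (X `&` S) c.
  by have := seg 1; rewrite ltr01 lexx subrr scale0r addr0 scale1r; apply.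
have Sp : closure S p by apply: (closure_segment _ c) => t /seg [].
have D_seg t : 0 < t <= 1 ->
    l * D (t *: c + (1 - t) *: p) <= l * (t * D c + (1 - t) * D p).
  move=> /[dup] t01 /andP[t_gt0 t_le1]; rewrite ler_wpM2l //.
  apply: bregman_convex_comb sc (subset_closure XSc.2) Sp _ _.
    by rewrite ltW.
  exact: subset_closure (seg t t01).2.
have g_seg t : dotv g (t *: c + (1 - t) *: p - x)
    = dotv g (p - x) + t * dotv g (c - p).
  have -> : t *: c + (1 - t) *: p - x = 1 *: (p - x) + t *: (c - p).
    by apply/rowP => j; rewrite !mxE; ring.
  by rewrite dotv_combr mul1r.
have smooth_seg t (t01 : 0 < t <= 1) := rs _ _ (seg t t01) (conj Xx Sx).
apply/andP; split.
  suff : - F p <= - F x - dotv g (p - x) + l * D p by lra.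
  apply: (continuous_segment_le _ c _ _ (- dotv g (c - p) + l * (D c - D p))
    (cvgN Fp)) => t t01.
  have /andP[+ _] := smooth_seg t t01; have := D_seg t t01; have := g_seg t.
  rewrite fctE; lra.
suff : F p <= F x + dotv g (p - x) + l * D p by lra.
apply: (continuous_segment_le _ c _ _ (dotv g (c - p) + l * (D c - D p)) Fp).
move=> t t01; have /andP[_ +] := smooth_seg t t01.
have := D_seg t t01; have := g_seg t; lra.
Qed.

Lemma rel_smooth_neg_subset1 : l < 0 -> is_norm N -> open S ->
  has_grad omega (gomega x) x -> X `&` S `<=` [set x].
Proof.
move=> l_lt0 [N0 _ _] oS gx y XSy.
have D_ge := bregman_ge_half_sqr _ _ _ oS Sx gx sc (subset_closure XSy.2).
have /andP[lo up] := rs _ _ XSy (conj Xx Sx).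
apply/subr0_eq/N0/eqP; rewrite -sqrf_eq0 eq_le sqr_ge0 andbT; nra.
Qed.

End RelSmoothExtension.

Theorem lemma8 (R : realType) (d : nat)
  (N : 'rV[R]_d -> R) (X S : set 'rV[R]_d)
  (omega : 'rV[R]_d -> R) (gomega : 'rV[R]_d -> 'rV[R]_d)
  (F r : 'rV[R]_d -> R) (gradF : 'rV[R]_d -> 'rV[R]_d) (l rho : R)
  (x xp : 'rV[R]_d) :
  is_norm N ->
  closed X -> convex_setV X ->
  is_DGF N X S omega gomega ->
  (forall z, has_grad F (gradF z) z) ->
  convex_fun r -> lower_semicontinuous (fun z => (r z)%:E) ->
  (* a minimizer in the definition of Phi_{1/rho}(x) exists *)
  (exists2 ys, X ys &
     forall y, X y -> (F ys + r ys) + rho * bregman omega gomega ys x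
                      <= (F y + r y) + rho * bregman omega gomega y x) ->
  rel_smooth F gradF l omega gomega (X `&` S) ->
  2 * l <= rho ->
  X x -> S x ->
  (* xp = x^+ is a minimizer over X of <gradF x, y> + r y + (rho - l) D(y, x) *)
  X xp ->
  (forall y, X y ->
     dotv (gradF x) xp + r xp + (rho - l) * bregman omega gomega xp x
     <= dotv (gradF x) y + r y + (rho - l) * bregman omega gomega y x) ->
  F xp + r xp <= moreau_env (fun y => F y + r y) omega gomega X rho x.
Proof.
(* Closedness of X and the properties of r only serve the existence of the
   minimizers, which is assumed. *)
move=> normN _ cX [oS relS gw _ sc] Fg _ _ [ys Xys ys_min] rs l2 Xx Sx Xxp xp_min.
have [c rel_seg] := exists_rel_interior_segment X x cX Xx.
have seg p : X p -> forall t, 0 < t <= 1 -> (X `&` S) (t *: c + (1 - t) *: p).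
  by move=> Xp t /(rel_seg p t Xp) XZ; split; [case: XZ | exact: relS].
suff Phi_xp : F xp + r xp <= F ys + r ys + rho * bregman omega gomega ys x.
  apply: lb_le_inf; first by exists (F x + r x + rho * bregman omega gomega x x), x.
  by move=> _ [y Xy <-]; apply: le_trans Phi_xp (ys_min y Xy).
have [l_ge0|l_lt0] := leP 0 l.
  have smooth p (Xp : X p) := rel_smooth_segment_end sc rs Xx Sx _ _ l_ge0
    (differentiable_continuous (Fg p).1) (seg p Xp).
  have D_xp : 0 <= bregman omega gomega xp x.
    apply: le_trans (bregman_ge_half_sqr _ _ _ oS Sx (gw x Sx) sc _).
      by rewrite divr_ge0 ?sqr_ge0.
    by apply: (closure_segment _ c) => t /(seg _ Xxp) [].
  have /andP[_ up] := smooth xp Xxp; have /andP[lo _] := smooth ys Xys.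
  have := xp_min ys Xys; rewrite !linearB /= in up lo *; nra.
have XS_x := rel_smooth_neg_subset1 sc rs Xx Sx l_lt0 normN oS (gw x Sx).
have eq_x p : X p -> p = x.
  by move=> Xp; apply: (segment_constant_eq c) => t /(seg _ Xp) /XS_x.
by rewrite (eq_x xp Xxp) (eq_x ys Xys) /bregman !subrr linear0 !subrr mulr0 addr0.
Qed.
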